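(* Let $G$ be a finite group and $p$ a prime. For nonidentity $p$-subgroups $H,K$ of $G$ put \[ [\mu]([H],[K])=\frac{1}{|N_G(H)|}\sum_{L\in[K]}\mu(H,L), \] where $[K]$ is the set of $G$-conjugates of $K$. Then $[\mu]$ depends only on the conjugacy classes $[H],[K]$, and the matrix $\big([\mu]([H],[K])\big)$ is the inverse of the matrix $\big(|N_G(H,K)|\big)_{[H],[K]}$, both indexed by the set of $G$-conjugacy classes of nonidentity $p$-subgroups of $G$.
   Context: $N_G(H,K)=\{g\in G: g^{-1}Hg\le K\}$; its cardinality depends only on the conjugacy classes of $H$ and $K$. $\mu(H,L)$ is the Möbius function of the poset of all subgroups of $G$ ($\mu(H,H)=1$, $\mu(H,L)=-\sum_{H\le M<L}\mu(H,M)$ for $H<L$, $0$ if $H\not\le L$). *)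

From mathcomp Require Import all_boot all_order all_algebra all_fingroup all_solvable.
Set Implicit Arguments. Unset Strict Implicit. Unset Printing Implicit Defensive.
Import GRing.Theory Num.Theory.
Local Open Scope group_scope.

Section Defs.
Variable gT : finGroupType.

(* Möbius function of the poset of all subgroups (of gT; intervals [H,L]
   do not depend on the ambient group).  Defined by the recursion
   mu(H,H)=1, mu(H,L) = - sum_{H<=M<L} mu(H,M) for H<L, 0 otherwise.
   [n] is fuel; [mobius] uses fuel #|L|.+1, which exceeds the length of
   any chain of subgroups below L. *)
Fixpoint mobius_rec (n : nat) (H L : {group gT}) : int :=
  if n is n'.+1 then
    if H == L then 1%R
    else if H \proper L then
      (- \sum_(M : {group gT} | (H \subset M) && (M \proper L)) mobius_rec n' H M)%R
    else 0%R
  else 0%R.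

Definition mobius (H L : {group gT}) : int := mobius_rec #|L|.+1 H L.

Definition transporter (G H K : {set gT}) : {set gT} :=
  [set g in G | H :^ g \subset K].

Definition gclass (G : {set gT}) (K : {group gT}) : {set {group gT}} :=
  orbit 'JG G K.

Definition ntpsub (p : nat) (G : {set gT}) : {set {group gT}} :=
  [set H : {group gT} | [&& H \subset G, p.-group H & H != 1 :> {set gT}]].

Definition pclasses (p : nat) (G : {set gT}) : {set {set {group gT}}} :=
  [set gclass G H | H in ntpsub p G].

Definition cmu (G : {group gT}) (H K : {group gT}) : rat :=
  ((#|'N_G(H)|%:R)^-1 * \sum_(L in gclass G K) (mobius H L)%:~R)%R.

Definition crep (C : {set {group gT}}) : {group gT} := odflt 1%G [pick L in C].

Definition cls_idx (p : nat) (G : {group gT}) (i : 'I_#|pclasses p G|) : {group gT} :=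
  crep (enum_val i).

Definition Nmat (p : nat) (G : {group gT}) : 'M[rat]_(#|pclasses p G|) :=
  \matrix_(i, j) (#|transporter G (cls_idx i) (cls_idx j)|%:R)%R.

Definition Mumat (p : nat) (G : {group gT}) : 'M[rat]_(#|pclasses p G|) :=
  \matrix_(i, j) cmu G (cls_idx i) (cls_idx j).

End Defs.

From mathcomp Require Import all_boot all_order all_algebra all_fingroup all_solvable.
Set Implicit Arguments. Unset Strict Implicit. Unset Printing Implicit Defensive.
Import GRing.Theory Num.Theory.
Local Open Scope group_scope.

(* Entry ([H],[K]) of [Mumat * Nmat] is |N_G(H)|^-1 times the sum of
   mu(H,L) |N_G(L,K)| over all nonidentity p-subgroups L, because |N_G(L,K)|
   only depends on the class of L.  Counting N_G(L,K) as the g in G with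
   L <= K^(g^-1) and exchanging the sums, the inner sum runs over the interval
   [H, K^(g^-1)], which consists of nonidentity p-subgroups, so it is the
   Moebius sum [H = K^(g^-1)].  What remains counts the g in G with H^g = K:
   there are |N_G(H)| of them when [H] = [K], and none otherwise.  The other
   product is the identity as well since the matrices are square. *)

Section Mobius.

Variable gT : finGroupType.
Implicit Types H L M : {group gT}.

Lemma mobius_rec_stable n m H L :
  #|L| < n -> #|L| < m -> mobius_rec n H L = mobius_rec m H L.
Proof.
elim: n m H L => [|n IHn] [|m] H L //= ltLn ltLm.
case: eqP => // _; case: ifP => // _; congr (- _)%R.
apply: eq_bigr => M /andP[_ /proper_card ltML].
by apply: IHn; apply: leq_trans ltML _.
Qed.

Lemma mobiusE H L :
  mobius H L = if H == L then 1%R else if H \proper L then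
    (- \sum_(M : {group gT} | (H \subset M) && (M \proper L)) mobius H M)%R
    else 0%R.
Proof.
rewrite {1}/mobius /=; case: eqP => // _; case: ifP => // _; congr (- _)%R.
apply: eq_bigr => M /andP[_ /proper_card ltML].
exact: mobius_rec_stable.
Qed.

Lemma mobius_eq0 H L : ~~ (H \subset L) -> mobius H L = 0%R.
Proof.
move=> sHL; rewrite mobiusE; case: eqP => [eHL|_]; first by rewrite eHL subxx in sHL.
by case: ifP => // /proper_sub sHL'; rewrite sHL' in sHL.
Qed.

Lemma sum_mobius H L :
  (\sum_(M : {group gT} | M \subset L) mobius H M)%R = (H == L)%:R%R.
Proof.
rewrite (bigID (fun M : {group gT} => H \subset M)) /=.
rewrite [X in (_ + X)%R]big1 ?addr0 => [|M /andP[_]]; last exact: mobius_eq0.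
have [sHL|nsHL] := boolP (H \subset L); last first.
  rewrite big_pred0 => [|M]; last by apply/andP=> -[sML /subset_trans/(_ sML)/idPn].
  by case: eqP => // eHL; rewrite eHL subxx in nsHL.
rewrite (bigD1 L) ?subxx //=.
have [<-|neHL] := eqVneq H L.
  rewrite mobiusE eqxx big1 ?addr0 // => M /andP[/andP[sMH sHM] neMH].
  by case/eqP: neMH; apply: val_inj; apply/eqP; rewrite eqEsubset sMH.
have ltHL : H \proper L by rewrite properEneq sHL andbT; apply: contraNneq neHL => /val_inj ->.
rewrite mobiusE ltHL (negPf neHL) addrC; apply/eqP; rewrite subr_eq0; apply/eqP.
by apply: eq_bigl => M; rewrite properEneq; case: (M \subset L); rewrite ?andbF ?andbT.
Qed.

Lemma mobius_recJ n g H L :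
  mobius_rec n (H :^ g)%G (L :^ g)%G = mobius_rec n H L.
Proof.
elim: n H L => [|n IHn] H L //=.
rewrite (inj_eq (act_inj 'JG g)) properJ.
case: eqP => // _; case: ifP => // _; congr (- _)%R.
rewrite (reindex_inj (act_inj 'JG g)) /=.
by apply: eq_big => [M|M _]; rewrite ?conjSg ?properJ ?IHn.
Qed.

Lemma mobiusJ g H L : mobius (H :^ g)%G (L :^ g)%G = mobius H L.
Proof. by rewrite /mobius cardJg mobius_recJ. Qed.

End Mobius.

Section ConjugacyClasses.

Variables (gT : finGroupType) (G : {group gT}) (p : nat).
Implicit Types H K L : {group gT}.

Lemma ntpsubJ g H : g \in G -> ((H :^ g)%G \in ntpsub p G) = (H \in ntpsub p G).
Proof. by move=> Gg; rewrite !inE /= pgroupJ conjsg_eq1 -{1}(conjGid Gg) conjSg. Qed.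

Lemma ntpsub_interval H L K :
  H \in ntpsub p G -> K \in ntpsub p G -> H \subset L -> L \subset K ->
  L \in ntpsub p G.
Proof.
rewrite !inE => /and3P[_ _ ntH] /and3P[sKG pK _] sHL sLK.
by rewrite (subset_trans sLK sKG) (pgroupS sLK pK) (subG1_contra sHL ntH).
Qed.

Lemma sum_mobius_ntpsub H K : H \in ntpsub p G -> K \in ntpsub p G ->
  (\sum_(L in ntpsub p G | L \subset K) mobius H L)%R = (H == K)%:R%R.
Proof.
move=> SH SK; rewrite -sum_mobius [RHS](bigID (mem (ntpsub p G))) /=.
rewrite [X in (_ + X)%R]big1 ?addr0 => [|L /andP[sLK SL]].
  by apply: eq_bigl => L; rewrite andbC.
apply: mobius_eq0; apply: contra SL => sHL.
exact: ntpsub_interval SH SK sHL sLK.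
Qed.

Lemma card_transporterJ g L K :
  g \in G -> #|transporter G (L :^ g) K| = #|transporter G L K|.
Proof.
move=> Gg; rewrite -[RHS](card_lcoset _ g^-1); apply: eq_card => x.
by rewrite mem_lcoset !inE invgK groupMl // conjsgM.
Qed.

Lemma card_transporter L K :
  #|transporter G L K| = (\sum_(g in G) (L \subset K :^ g^-1))%N.
Proof.
transitivity (\sum_(g in G | L \subset K :^ g^-1) 1)%N.
  by rewrite -sum1_card; apply: eq_bigl => g; rewrite !inE sub_conjg.
by rewrite big_mkcondr; apply: eq_bigr => g _; case: (_ \subset _).
Qed.

Lemma sum_mobius_card_transporter (R : pzRingType) H K :
  H \in ntpsub p G -> K \in ntpsub p G ->
  (\sum_(L in ntpsub p G) (mobius H L)%:~R * #|transporter G L K|%:R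
    = #|[set g in G | (H :^ g)%G == K]|%:R :> R)%R.
Proof.
move=> SH SK; under eq_bigr do rewrite card_transporter natr_sum mulr_sumr.
rewrite exchange_big -sum1_card big_set /= natr_sum big_mkcondr /=.
apply: eq_bigr => g Gg.
transitivity ((\sum_(L in ntpsub p G | L \subset K :^ g^-1) mobius H L)%:~R : R)%R.
  rewrite rmorph_sum big_mkcondr /=; apply: eq_bigr => L _.
  by case: (_ \subset _); rewrite ?mulr1 ?mulr0.
rewrite sum_mobius_ntpsub ?ntpsubJ ?groupV //.
by rewrite -(inj_eq (act_inj 'JG g)) actKV; case: eqP.
Qed.

Lemma card_conj_fixed H : #|[set g in G | (H :^ g)%G == H]| = #|'N_G(H)|.
Proof.
by apply: eq_card => g; rewrite !inE -val_eqE eqEcard /= cardJg leqnn andbT.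
Qed.

Lemma crep_pclasses C :
  C \in pclasses p G -> crep C \in ntpsub p G /\ gclass G (crep C) = C.
Proof.
case/imsetP=> H SH ->; rewrite /crep; case: pickP => [L | /(_ H)]; last first.
  by rewrite /gclass orbit_refl.
by case/orbitP=> g Gg <-; split; [rewrite ntpsubJ | apply/orbit_eqP/orbitP; exists g].
Qed.

Lemma cls_idx_conj (i k : 'I_#|pclasses p G|) g :
  g \in G -> (cls_idx i :^ g)%G = cls_idx k -> i = k.
Proof.
move=> Gg eik; apply: enum_val_inj.
have [_ <-] := crep_pclasses (enum_valP i); have [_ <-] := crep_pclasses (enum_valP k).
rewrite /gclass -[crep (enum_val k)]/(cls_idx k) -eik.
by apply/esym/orbit_eqP; apply: mem_orbit.
Qed.

Lemma sum_pclasses (R : nmodType) (F : {group gT} -> R) :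
  (\sum_(i < #|pclasses p G|) \sum_(L in gclass G (cls_idx i)) F L
    = \sum_(L in ntpsub p G) F L)%R.
Proof.
have actsG : [acts G, on ntpsub p G | 'JG] by apply/actsP=> g Gg H; apply: ntpsubJ.
have [/eqP covS trivS _] := and3P (orbit_partition actsG).
transitivity (\sum_(C in pclasses p G) \sum_(L in gclass G (crep C)) F L)%R.
  by rewrite (big_enum_val (A := mem (pclasses p G))).
transitivity (\sum_(C in pclasses p G) \sum_(L in C) F L)%R.
  by apply: eq_bigr => C /crep_pclasses[_ ->].
by rewrite -(big_trivIset _ trivS) covS.
Qed.

End ConjugacyClasses.

Section ClassMobius.

Variables (gT : finGroupType) (G : {group gT}) (p : nat).
Implicit Types H K : {group gT}.
Local Open Scope ring_scope.

Lemma cmu_gclass H H' K K' :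
  H' \in gclass G H -> K' \in gclass G K -> cmu G H' K' = cmu G H K.
Proof.
case/orbitP=> g Gg <- /orbit_eqP eqK; rewrite /cmu /gclass /= eqK; congr (_ * _).
  by rewrite normJ -{1}(conjGid Gg) -conjIg cardJg.
rewrite (reindex_inj (act_inj 'JG g)) /=.
apply: eq_big => [L|L _]; last by rewrite mobiusJ.
by apply: orbit_transl; apply: mem_orbit.
Qed.

Lemma Mumat_mulmx_Nmat : Mumat p G *m Nmat p G = 1%:M.
Proof.
apply/matrixP => i k; rewrite !mxE.
set H := cls_idx i; set K := cls_idx k.
have [SH _] := crep_pclasses (enum_valP i); have [SK _] := crep_pclasses (enum_valP k).
transitivity (#|'N_G(H)|%:R^-1 *
    \sum_(L in ntpsub p G) (mobius H L)%:~R * #|transporter G L K|%:R : rat).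
  rewrite -sum_pclasses mulr_sumr; apply: eq_bigr => j _.
  rewrite !mxE /cmu -mulrA mulr_suml; congr (_ * _); apply: eq_bigr => L.
  by case/orbitP=> g Gg <-; rewrite /= card_transporterJ.
rewrite sum_mobius_card_transporter //.
have [eik|neik] := eqVneq i k.
  by rewrite /K -eik card_conj_fixed mulVf // pnatr_eq0 -lt0n cardG_gt0.
rewrite (_ : [set g in G | _] = set0) ?cards0 ?mulr0 //.
apply/setP=> g; rewrite !inE; apply/andP=> -[Gg /eqP/(cls_idx_conj Gg) eik].
by rewrite eik eqxx in neik.
Qed.

End ClassMobius.

Theorem proposition3p5 (gT : finGroupType) (G : {group gT}) (p : nat) :
  prime p ->
  (forall H H' K K' : {group gT},
      H \in ntpsub p G -> K \in ntpsub p G ->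
      H' \in gclass G H -> K' \in gclass G K ->
      cmu G H K = cmu G H' K') /\
  (Mumat p G *m Nmat p G = 1%:M)%R /\ (Nmat p G *m Mumat p G = 1%:M)%R.
Proof.
move=> _; split=> [H H' K K' _ _ H'H K'K | ]; first by rewrite (cmu_gclass H'H K'K).
by split; [|apply: mulmx1C]; apply: Mumat_mulmx_Nmat.
Qed.
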